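(* Let $\gamma>0$, $\Delta\in[0,1)$, $\zeta\in(0,1]$ and suppose $\gamma<\frac{1+\Delta}{\zeta\sigma_{\max}^2}$ and $\frac{(1-\zeta)\gamma}{1-\Delta}\cdot\frac1n\operatorname{tr}(\boldsymbol A\boldsymbol A^T)<1$. Then $\|\mathcal K\|:=\sum_{t=0}^\infty\mathcal K(t)<1$.
   Context: $\boldsymbol A\in\mathbb R^{n\times d}$, $\sigma_1^2\ge\dots\ge\sigma_n^2\ge0$ the eigenvalues of $\boldsymbol A\boldsymbol A^T$, $\sigma_{\max}^2$ the largest. For $j\in[n]$: $\Omega_j=1-\gamma\zeta\sigma_j^2+\Delta$, $\lambda_{2,j},\lambda_{3,j}=\frac{-2\Delta+\Omega_j^2\pm\sqrt{\Omega_j^2(\Omega_j^2-4\Delta)}}{2}$ (complex square root if the argument is negative). The kernel is $\mathcal K(t)=\gamma^2\zeta(1-\zeta)H_2(t)$ with $H_2(t)=\frac1n\sum_{j=1}^n\frac{2\sigma_j^4}{\Omega_j^2-4\Delta}\big(-\Delta^{t+1}+\frac12\lambda_{2,j}^{t+1}+\frac12\lambda_{3,j}^{t+1}\big)$ (terms with $\Omega_j^2=4\Delta$ understood by continuity). *)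

From HB Require Import structures.
From mathcomp Require Import all_boot all_order all_algebra.
From mathcomp Require Import all_classical all_reals all_analysis.
From mathcomp Require Import complex.
Set Implicit Arguments. Unset Strict Implicit. Unset Printing Implicit Defensive.
Import Order.TTheory GRing.Theory Num.Theory.
Local Open Scope ring_scope.

Definition Omega {R : realType} (gamma zeta Delta s2 : R) : R :=
  1 - gamma * zeta * s2 + Delta.

Definition lam2 {R : realType} (gamma zeta Delta s2 : R) : R[i] :=
  let O := Omega gamma zeta Delta s2 in
  (((- (2 * Delta) + O ^+ 2)%:C + sqrtc ((O ^+ 2 * (O ^+ 2 - 4 * Delta))%:C)) / 2%:R)%C.

Definition lam3 {R : realType} (gamma zeta Delta s2 : R) : R[i] :=
  let O := Omega gamma zeta Delta s2 in
  (((- (2 * Delta) + O ^+ 2)%:C - sqrtc ((O ^+ 2 * (O ^+ 2 - 4 * Delta))%:C)) / 2%:R)%C.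

(* The j-th summand of H_2(t):
     2 sigma^4/(Omega^2 - 4 Delta) * (-Delta^(t+1) + lam2^(t+1)/2 + lam3^(t+1)/2)
   (a real number; we take the real part of the complex expression, whose
   imaginary part vanishes).  In the degenerate case Omega^2 = 4 Delta the value
   is the continuous extension sigma^4 (t+1)^2 Delta^t. *)
Definition H2term {R : realType} (gamma zeta Delta s2 : R) (t : nat) : R :=
  let O := Omega gamma zeta Delta s2 in
  if O ^+ 2 == 4 * Delta then s2 ^+ 2 * (t.+1)%:R ^+ 2 * Delta ^+ t
  else complex.Re (((2 * s2 ^+ 2 / (O ^+ 2 - 4 * Delta))%:C *
            (- (Delta ^+ t.+1)%:C + lam2 gamma zeta Delta s2 ^+ t.+1 / 2%:R
                                   + lam3 gamma zeta Delta s2 ^+ t.+1 / 2%:R))%C).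

Definition H2 {R : realType} (n : nat) (s : 'I_n -> R) (gamma zeta Delta : R)
  (t : nat) : R :=
  n%:R^-1 * \sum_(j < n) H2term gamma zeta Delta (s j) t.

Definition Kker {R : realType} (n : nat) (s : 'I_n -> R) (gamma zeta Delta : R)
  (t : nat) : R :=
  gamma ^+ 2 * zeta * (1 - zeta) * H2 s gamma zeta Delta t.

From mathcomp Require Import all_boot all_order all_algebra.
From mathcomp Require Import all_classical all_reals all_analysis.
From mathcomp Require Import complex.
From mathcomp Require Import ring lra.

(* For each eigenvalue s = sigma_j^2 of A A^T write x = gamma zeta s and
   Omega = 1 + Delta - x, so that 0 < Omega < 1 + Delta when s > 0.  The numbers
   lambda_{2,j}, lambda_{3,j} are the roots of l^2 - (Omega^2 - 2 Delta) l + Delta^2,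
   and Jury's criterion puts them in the open unit disc; the j-th summand of H_2
   is thus a combination of three geometric sequences (or, when Omega^2 = 4 Delta,
   of (t+1)^2 Delta^t), whose sum is
     s^2 (1 + Delta) / ((1 - Delta) ((1 + Delta)^2 - Omega^2))
       = s (1 + Delta) / (gamma zeta (1 - Delta) (2 (1 + Delta) - x)).
   As x < 1 + Delta, the j-th contribution to the sum of K is at most
   (1 - zeta) gamma / (1 - Delta) * s, and averaging over j gives the trace
   condition, since the s are the (nonnegative) eigenvalues of A A^T. *)

Set Implicit Arguments.
Unset Strict Implicit.
Unset Printing Implicit Defensive.

Import Order.TTheory GRing.Theory Num.Theory numFieldNormedType.Exports.
Import Normc.
Local Open Scope classical_set_scope.
Local Open Scope ring_scope.
Local Open Scope complex_scope.

Lemma char_poly_prod_eigenvalue (F : fieldType) n (M : 'M[F]_n) (s : 'I_n -> F) j :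
  char_poly M = \prod_(i < n) ('X - (s i)%:P) -> eigenvalue M (s j).
Proof.
move=> hM; rewrite eigenvalue_root_char hM /root horner_prod (bigD1 j) //=.
by rewrite hornerXsubC subrr mul0r.
Qed.

Lemma char_poly_prod_trace (K : comNzRingType) n (M : 'M[K]_n) (s : 'I_n -> K) :
  (0 < n)%N -> char_poly M = \prod_(i < n) ('X - (s i)%:P) -> \tr M = \sum_(i < n) s i.
Proof.
move=> n0 hM; apply: oppr_inj; rewrite -char_poly_trace // hM.
rewrite -(big_map s xpredT (fun x => 'X - x%:P)) -(big_map s xpredT id).
have sz : size [seq s i | i <- index_enum 'I_n] = n.
  by rewrite size_map /index_enum -enumT size_enum_ord.
by rewrite -[in n.-1]sz coefPn_prod_XsubC // sz -lt0n.
Qed.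

Section Gram.
Variable R : realFieldType.

Lemma mulmx_trmx_row m (v : 'rV[R]_m) : (v *m v^T) 0 0 = \sum_(i < m) v 0 i ^+ 2.
Proof. by rewrite mxE; apply: eq_bigr => i _; rewrite mxE expr2. Qed.

Lemma mulmx_trmx_row_gt0 m (v : 'rV[R]_m) : v != 0 -> 0 < (v *m v^T) 0 0.
Proof.
move=> v0; rewrite mulmx_trmx_row lt_def sumr_ge0 ?andbT => [|i _]; last exact: sqr_ge0.
apply: contra v0; rewrite psumr_eq0 => [/allP v0|i _]; last exact: sqr_ge0.
apply/eqP/rowP => i; rewrite mxE.
by move: (v0 i (mem_index_enum i)); rewrite sqrf_eq0 => /eqP.
Qed.

Lemma eigenvalue_gram_ge0 n d (A : 'M[R]_(n, d)) a : eigenvalue (A *m A^T) a -> 0 <= a.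
Proof.
case/eigenvalueP => v hv v0.
have e : ((v *m A) *m (v *m A)^T) 0 0 = a * (v *m v^T) 0 0.
  by rewrite trmx_mul mulmxA -(mulmxA v A) hv -scalemxAl mxE.
rewrite -(pmulr_lge0 a (mulmx_trmx_row_gt0 v0)) -e mulmx_trmx_row.
by apply: sumr_ge0 => i _; exact: sqr_ge0.
Qed.
End Gram.

Section PolynomialTimesGeometric.
Variable R : realType.
Implicit Types x y : R.

Lemma natr_mul_expr_le y n : 0 <= y < 1 -> n%:R * y ^+ n <= (1 - y)^-1.
Proof.
move=> /andP[y0 y1]; rewrite -div1r ler_pdivlMr ?subr_gt0 //.
have geo : (\sum_(k < n) y ^+ k) * (1 - y) = 1 - y ^+ n.
  by rewrite mulrC -[1 - y]opprB mulNr -subrX1 opprB.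
have : n%:R * y ^+ n <= \sum_(k < n) y ^+ k.
  rewrite -[n in n%:R]card_ord -sumr_const mulr_suml.
  apply: ler_sum => k _; rewrite mul1r.
  exact: (ler_wiXn2l y0 (ltW y1) (ltnW (ltn_ord k))).
have : 0 <= y ^+ n by rewrite exprn_ge0.
have : 0 <= 1 - y by rewrite subr_ge0 ltW.
nra.
Qed.

Lemma cvg_natr_mul_expr x : 0 <= x < 1 -> (fun n => n%:R * x ^+ n) @ \oo --> 0.
Proof.
move=> /andP[x0 x1]; set y := Num.sqrt x.
have y0 : 0 <= y by rewrite sqrtr_ge0.
have yx : y ^+ 2 = x by rewrite sqr_sqrtr.
have y1 : y < 1 by nra.
apply: (@squeeze_cvgr _ _ _ _ (fun=> 0) (geometric (1 - y)^-1 y)).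
- near=> n; rewrite mulr_ge0 ?exprn_ge0 //= /geometric.
  rewrite -yx -exprM mulnC exprM expr2 mulrA ler_wpM2r ?exprn_ge0 //.
  by apply: natr_mul_expr_le; rewrite y0.
- exact: cvg_cst.
- by apply: cvg_geometric; rewrite ger0_norm.
Unshelve. all: by end_near.
Qed.

Lemma cvg_sqr_natr_mul_expr x : 0 <= x < 1 -> (fun n => n%:R ^+ 2 * x ^+ n) @ \oo --> 0.
Proof.
move=> /andP[x0 x1]; set y := Num.sqrt x.
have y01 : 0 <= y < 1 by rewrite sqrtr_ge0 /= -sqrtr1 ltr_sqrt ?ltr01.
have -> : (fun n => n%:R ^+ 2 * x ^+ n) = (fun n => (n%:R * y ^+ n) * (n%:R * y ^+ n)).
  by apply/funext => n; rewrite -[x]sqr_sqrtr // -exprM mulnC exprM; ring.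
by rewrite -(mulr0 0); apply: cvgM; exact: cvg_natr_mul_expr.
Qed.

Lemma sum_sqr_succ_mul_expr x n :
  (1 - x) ^+ 3 * \sum_(t < n) (t.+1)%:R ^+ 2 * x ^+ t =
  1 + x - ((1 - x) ^+ 2 * (n%:R ^+ 2 * x ^+ n) + 2 * (1 - x) * (n%:R * x ^+ n)
           + (1 + x) * x ^+ n).
Proof.
elim: n => [|n IH]; first by rewrite big_ord0 !expr0; ring.
by rewrite big_ord_recr mulrDr IH -!natr1 !exprS; ring.
Qed.

Lemma cvg_series_sqr_succ_mul_expr x : 0 <= x < 1 ->
  series (fun t => (t.+1)%:R ^+ 2 * x ^+ t) @ \oo --> (1 + x) / (1 - x) ^+ 3.
Proof.
move=> x01; have /andP[x0 x1] := x01.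
have x3 : (1 - x) ^+ 3 != 0 by rewrite expf_neq0 // subr_eq0 gt_eqF.
have -> : series (fun t => (t.+1)%:R ^+ 2 * x ^+ t) = (fun n =>
    (1 + x - ((1 - x) ^+ 2 * (n%:R ^+ 2 * x ^+ n) + 2 * (1 - x) * (n%:R * x ^+ n)
              + (1 + x) * x ^+ n)) / (1 - x) ^+ 3).
  apply/funext => n; rewrite seriesEord /= -sum_sqr_succ_mul_expr.
  by rewrite mulrC mulKf.
apply: cvgMr_tmp; rewrite -[X in _ --> X]subr0; apply: cvgB; first exact: cvg_cst.
suff : (fun n => (1 - x) ^+ 2 * (n%:R ^+ 2 * x ^+ n) + 2 * (1 - x) * (n%:R * x ^+ n)
                 + (1 + x) * x ^+ n) @ \oo -->
       (1 - x) ^+ 2 * 0 + 2 * (1 - x) * 0 + (1 + x) * 0.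
  by rewrite !mulr0 !addr0.
apply: cvgD; first apply: cvgD; apply: cvgMl_tmp.
- exact: cvg_sqr_natr_mul_expr.
- exact: cvg_natr_mul_expr.
- by apply: cvg_expr; rewrite ger0_norm.
Qed.
End PolynomialTimesGeometric.

Section ComplexGeometric.
Variable R : realType.
Implicit Types k x : R[i].

Lemma normr_Re_le_normc x : `|complex.Re x| <= normc x.
Proof. by case: x => a b; rewrite -sqrtr_sqr ler_wsqrtr // lerDl sqr_ge0. Qed.

Lemma normcX x n : normc (x ^+ n) = normc x ^+ n.
Proof. by elim: n => [|n IH]; rewrite ?normc1 // !exprS normcM IH. Qed.

Lemma cvg_Re_mul_expr k x : normc x < 1 -> (fun n => complex.Re (k * x ^+ n)) @ \oo --> 0.
Proof.
move=> x1; apply/norm_cvg0P.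
apply: (@squeeze_cvgr _ _ _ _ (fun=> 0) (geometric (normc k) (normc x))).
- near=> n; rewrite normr_ge0 /= /geometric -normcX -normcM.
  exact: normr_Re_le_normc.
- exact: cvg_cst.
- by apply: cvg_geometric; rewrite ger0_norm // (le_trans _ (normr_Re_le_normc x)).
Unshelve. all: by end_near.
Qed.

Lemma cvg_Re_geometric_series k x : normc x < 1 ->
  series (fun t => complex.Re (k * x ^+ t.+1)) @ \oo --> complex.Re (k * x / (1 - x)).
Proof.
move=> x1.
have x1' : x != 1 by apply: contraTneq x1 => ->; rewrite normc1 ltxx.
have -> : series (fun t => complex.Re (k * x ^+ t.+1)) =
    (fun n => complex.Re (k * x / (1 - x)) - complex.Re (k * x / (1 - x) * x ^+ n)).
  apply/funext => n; rewrite -raddfB seriesEord /=.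
  rewrite -(raddf_sum (@complex.Re R : Rcomplex R -> R)) /=; congr complex.Re.
  have := congr1 (fun u => u n) (geometric_seriesE (k * x) x1').
  rewrite seriesEord /geometric /= => geo.
  under eq_bigr do rewrite exprS mulrA.
  rewrite geo; field; by rewrite subr_eq0 eq_sym.
rewrite -[X in _ --> X]subr0; apply: cvgB; [exact: cvg_cst | exact: cvg_Re_mul_expr].
Qed.
End ComplexGeometric.

Lemma normc_lt1_quadratic_root (R : realType) (a c : R) (l : R[i]) :
  0 <= c < 1 -> `|a| < 1 + c -> l ^+ 2 - a%:C * l + c%:C = 0 -> normc l < 1.
Proof.
move=> /andP[c0 c1]; rewrite ltr_norml => /andP[ha1 ha2].
case: l => u v /eqP; rewrite eq_complex /= !expr2 /= => /andP[/eqP hre /eqP him].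
rewrite -sqrtr1 ltr_sqrt ?ltr01 //.
have [v0|v0] := eqVneq v 0.
  rewrite v0 in hre *.
  have u1 : u < 1.
    rewrite ltNge; apply/negP => u1.
    have : 0 <= (u - 1) * (u + 1 - a) by rewrite mulr_ge0 // subr_ge0 //; lra.
    lra.
  have u1' : -1 < u.
    rewrite ltNge; apply/negP => u1'.
    have : 0 <= (- 1 - u) * (1 - u + a) by rewrite mulr_ge0 //; lra.
    lra.
  nra.
have hu : 2 * u = a.
  have : v * (2 * u - a) = 0 by rewrite -him; ring.
  by move/eqP; rewrite mulf_eq0 (negbTE v0) subr_eq0 => /eqP.
nra.
Qed.

Section QuadraticRoots.
Variables (R : realType) (a c : R) (w : R[i]).
Hypothesis hw : w ^+ 2 = (a ^+ 2 - 4 * c)%:C.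

Let lp := (a%:C + w) / 2%:R.
Let lm := (a%:C - w) / 2%:R.

Let quadratic_coef0E : c%:C = (a%:C ^+ 2 - w ^+ 2) / 4%:R.
Proof. by rewrite hw !(rmorphB, rmorphM, rmorphXn, rmorph_nat); field. Qed.

Lemma quadratic_root_addr : lp ^+ 2 - a%:C * lp + c%:C = 0.
Proof. by rewrite quadratic_coef0E /lp; field. Qed.

Lemma quadratic_root_subr : lm ^+ 2 - a%:C * lm + c%:C = 0.
Proof. by rewrite quadratic_coef0E /lm; field. Qed.

Lemma quadratic_roots_div1B : 1 - a + c != 0 ->
  lp / (1 - lp) + lm / (1 - lm) = ((a - 2 * c) / (1 - a + c))%:C.
Proof.
move=> h.
have hsum : lp + lm = a%:C by rewrite /lp /lm; field.
have hmul : lp * lm = c%:C by rewrite quadratic_coef0E /lp /lm; field.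
have hprod : (1 - a + c)%:C = (1 - lp) * (1 - lm).
  by rewrite rmorphD rmorphB rmorph1 /= -hsum -hmul; ring.
have [hp hm] : 1 - lp != 0 /\ 1 - lm != 0.
  apply/andP; rewrite -negb_or -mulf_eq0 -hprod.
  by rewrite eq_complex /= negb_and h.
rewrite fmorph_div rmorphB rmorphM rmorph_nat /= -hsum -hmul hprod.
by field; rewrite hp hm.
Qed.
End QuadraticRoots.

Section LambdaRoots.
Variables (R : realType) (g z D s2 : R).
Hypotheses (D01 : 0 <= D < 1) (O01 : 0 < Omega g z D s2 < 1 + D).

Let a := - (2 * D) + Omega g z D s2 ^+ 2.

Let lam_disc :
  sqrtc (Omega g z D s2 ^+ 2 * (Omega g z D s2 ^+ 2 - 4 * D))%:C ^+ 2 =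
  (a ^+ 2 - 4 * D ^+ 2)%:C.
Proof. by rewrite sqr_sqrtc /a; congr _%:C; ring. Qed.

Let lam_jury : 0 <= D ^+ 2 < 1 /\ `|a| < 1 + D ^+ 2.
Proof.
have /andP[D0 D1] := D01; have /andP[Opos Olt] := O01.
by rewrite sqr_ge0 ltr_norml /a expr2; split; [nra | apply/andP; split; nra].
Qed.

Lemma normc_lam2_lt1 : normc (lam2 g z D s2) < 1.
Proof.
have [hD2 ha] := lam_jury.
exact: normc_lt1_quadratic_root hD2 ha (quadratic_root_addr lam_disc).
Qed.

Lemma normc_lam3_lt1 : normc (lam3 g z D s2) < 1.
Proof.
have [hD2 ha] := lam_jury.
exact: normc_lt1_quadratic_root hD2 ha (quadratic_root_subr lam_disc).
Qed.

Lemma lam_div1B_sum :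
  lam2 g z D s2 / (1 - lam2 g z D s2) + lam3 g z D s2 / (1 - lam3 g z D s2) =
  ((a - 2 * D ^+ 2) / (1 - a + D ^+ 2))%:C.
Proof.
apply: (quadratic_roots_div1B lam_disc).
by have /andP[Opos Olt] := O01; apply/lt0r_neq0; rewrite /a; nra.
Qed.
End LambdaRoots.

Section H2Series.
Variable R : realType.

(* At s2 = 0 the denominator vanishes, and x / 0 = 0 gives the right sum 0. *)
Definition H2term_sum (gamma zeta Delta s2 : R) : R :=
  s2 ^+ 2 * (1 + Delta) /
  ((1 - Delta) * ((1 + Delta) ^+ 2 - Omega gamma zeta Delta s2 ^+ 2)).

Lemma cvg_series_H2term_nondegenerate (g z D s2 : R) :
  0 <= D < 1 -> 0 < Omega g z D s2 < 1 + D -> Omega g z D s2 ^+ 2 != 4 * D ->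
  series (H2term g z D s2) @ \oo --> H2term_sum g z D s2.
Proof.
move=> D01 O01 hO; have /andP[D0 D1] := D01; rewrite /H2term_sum.
have D_lt1 : normc D%:C < 1 by rewrite /= expr0n addr0 sqrtr_sqr ger0_norm.
have l2_lt1 := normc_lam2_lt1 D01 O01; have l3_lt1 := normc_lam3_lt1 D01 O01.
have l_sum := lam_div1B_sum O01.
set O := Omega g z D s2 in O01 hO l_sum *.
set l2 := lam2 g z D s2 in l2_lt1 l_sum *; set l3 := lam3 g z D s2 in l3_lt1 l_sum *.
set c0 := 2 * s2 ^+ 2 / (O ^+ 2 - 4 * D).
have -> : H2term g z D s2 = (fun t => complex.Re ((- c0)%:C * D%:C ^+ t.+1)) +
    (fun t => complex.Re ((c0 / 2)%:C * l2 ^+ t.+1)) +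
    (fun t => complex.Re ((c0 / 2)%:C * l3 ^+ t.+1)).
  apply/funext => t; rewrite /H2term -/O (negbTE hO) -/l2 -/l3 -/c0 !fctE -!raddfD.
  congr complex.Re.
  clearbody c0; rewrite !(rmorphN, rmorphM, fmorphV, rmorph_nat, rmorphXn) /=.
  by field.
have -> : s2 ^+ 2 * (1 + D) / ((1 - D) * ((1 + D) ^+ 2 - O ^+ 2)) =
    complex.Re ((- c0)%:C * D%:C / (1 - D%:C)) +
    complex.Re ((c0 / 2)%:C * l2 / (1 - l2)) + complex.Re ((c0 / 2)%:C * l3 / (1 - l3)).
  rewrite -!raddfD -addrA -[_ * l2 / _]mulrA -[_ * l3 / _]mulrA -mulrDr l_sum.
  have hDC : (- c0)%:C * D%:C / (1 - D%:C) = (- c0 * D / (1 - D))%:C.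
    by rewrite fmorph_div rmorphM rmorphB rmorph1.
  rewrite hDC -rmorphM -rmorphD /= /c0.
  have /andP[Opos Olt] := O01.
  have hP : 1 - (- (2 * D) + O ^+ 2) + D ^+ 2 != 0 by apply/lt0r_neq0; nra.
  by field; rewrite hP subr_eq0 hO subr_eq0 gt_eqF.
rewrite !seriesD; apply: cvgD; [apply: cvgD|]; exact: cvg_Re_geometric_series.
Qed.

Lemma cvg_series_H2term_degenerate (g z D s2 : R) :
  0 <= D < 1 -> Omega g z D s2 ^+ 2 = 4 * D ->
  series (H2term g z D s2) @ \oo --> H2term_sum g z D s2.
Proof.
move=> D01 hO; have /andP[D0 D1] := D01.
have -> : series (H2term g z D s2) =
    (fun n => s2 ^+ 2 * series (fun t => (t.+1)%:R ^+ 2 * D ^+ t) n).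
  apply/funext => n; rewrite !seriesEord /= mulr_sumr.
  by apply: eq_bigr => t _; rewrite /H2term hO eqxx mulrA.
have -> : H2term_sum g z D s2 = s2 ^+ 2 * ((1 + D) / (1 - D) ^+ 3).
  rewrite /H2term_sum hO (_ : (1 + D) ^+ 2 - 4 * D = (1 - D) ^+ 2); last by ring.
  by field; rewrite subr_eq0 gt_eqF.
by apply: cvgMl_tmp; exact: cvg_series_sqr_succ_mul_expr.
Qed.

Lemma cvg_series_H2term (g z D s2 : R) : 0 < g -> 0 < z -> 0 <= D < 1 -> 0 <= s2 ->
  g * (z * s2) < 1 + D -> series (H2term g z D s2) @ \oo --> H2term_sum g z D s2.
Proof.
move=> g0 z0 D01 s0 hx; have /andP[D0 D1] := D01.
have [->|s2_neq0] := eqVneq s2 0.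
  have -> : H2term g z D 0 = 0.
    apply/funext => t; rewrite /H2term expr0n /= mul0r.
    by case: ifP => _; rewrite ?mul0r // mulr0 mul0r rmorph0 mul0r.
  have -> : series (0 : R^nat) = 0 by apply/funext => n; rewrite seriesEord /= big1.
  by rewrite /H2term_sum expr0n /= !mul0r; exact: cvg_cst.
have hO : 0 < Omega g z D s2 < 1 + D.
  have : 0 < g * (z * s2) by rewrite !mulr_gt0 // lt_def s2_neq0.
  by rewrite /Omega mulrA; lra.
have [hdeg|hdeg] := eqVneq (Omega g z D s2 ^+ 2) (4 * D).
  exact: cvg_series_H2term_degenerate.
exact: cvg_series_H2term_nondegenerate.
Qed.

Lemma H2term_sum_le (g z D s2 : R) : 0 < g -> 0 < z <= 1 -> 0 <= D < 1 -> 0 <= s2 ->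
  g * (z * s2) < 1 + D ->
  g ^+ 2 * z * (1 - z) * H2term_sum g z D s2 <= (1 - z) * g / (1 - D) * s2.
Proof.
move=> g0 /andP[z0 z1] /andP[D0 D1] s0 hx.
have [->|s2_neq0] := eqVneq s2 0; first by rewrite /H2term_sum expr0n /= !(mul0r, mulr0).
set x := g * (z * s2) in hx.
have x0 : 0 < x by rewrite !mulr_gt0 // lt_def s2_neq0.
have -> : g ^+ 2 * z * (1 - z) * H2term_sum g z D s2 =
    (1 - z) * g / (1 - D) * s2 * ((1 + D) / (2 * (1 + D) - x)).
  have hx2 : 2 * (1 + D) - x != 0 by apply/lt0r_neq0; lra.
  have hP : (1 + D) ^+ 2 - (1 - g * z * s2 + D) ^+ 2 != 0.
    by rewrite -mulrA -/x; apply/lt0r_neq0; nra.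
  by rewrite /H2term_sum /Omega /x; field; rewrite -/x hx2 hP subr_eq0 gt_eqF.
rewrite ler_piMr //.
  by rewrite mulr_ge0 // divr_ge0 ?mulr_ge0 ?subr_ge0 // ltW.
by rewrite ler_pdivrMr ?mul1r; lra.
Qed.
End H2Series.

Lemma cvg_series_Kker (R : realType) n (s : 'I_n -> R) (g z D : R) :
  0 < g -> 0 < z -> 0 <= D < 1 -> (forall j, 0 <= s j) ->
  (forall j, g * (z * s j) < 1 + D) ->
  series (Kker s g z D) @ \oo -->
    g ^+ 2 * z * (1 - z) * (n%:R^-1 * \sum_(j < n) H2term_sum g z D (s j)).
Proof.
move=> g0 z0 D01 s0 hs.
have -> : series (Kker s g z D) = (fun N =>
    g ^+ 2 * z * (1 - z) * (n%:R^-1 * \sum_(j < n) series (H2term g z D (s j)) N)).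
  apply/funext => N; rewrite !seriesEord /= /Kker /H2 -!mulr_sumr exchange_big /=.
  by under [X in _ = _ * (_ * X)]eq_bigr do rewrite seriesEord.
apply: cvgMl_tmp; apply: cvgMl_tmp; apply: cvg_big => // [|j _].
  exact: add_continuous.
exact: cvg_series_H2term.
Qed.

Theorem proposition2 (R : realType) (n d : nat) (A : 'M[R]_(n, d))
  (s : 'I_n -> R) (gamma Delta zeta : R) :
  (0 < n)%N ->
  char_poly (A *m A^T) = \prod_(j < n) ('X - (s j)%:P) ->
  0 < gamma -> 0 <= Delta < 1 -> 0 < zeta <= 1 ->
  (* gamma < (1+Delta)/(zeta sigma_max^2), cleared of the denominator *)
  gamma * (zeta * \big[Num.max/0]_(j < n) s j) < 1 + Delta ->
  (1 - zeta) * gamma / (1 - Delta) * (n%:R^-1 * \tr (A *m A^T)) < 1 ->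
  cvgn (series (Kker s gamma zeta Delta)) /\
  limn (series (Kker s gamma zeta Delta)) < 1.
Proof.
move=> n0 hA g0 D01 z01 hmax htr; have /andP[z0 z1] := z01.
have s0 j : 0 <= s j by apply: eigenvalue_gram_ge0; exact: char_poly_prod_eigenvalue hA.
have hs j : gamma * (zeta * s j) < 1 + Delta.
  apply: le_lt_trans hmax; rewrite !ler_pM2l // (bigD1 j) //=.
  by rewrite le_max lexx.
have hK := cvg_series_Kker g0 z0 D01 s0 hs.
split; first exact: cvgP hK.
rewrite (cvg_lim _ hK) //; apply: le_lt_trans htr.
rewrite (char_poly_prod_trace n0 hA) mulrCA [leRHS]mulrCA.
apply: ler_wpM2l; first by rewrite invr_ge0.
rewrite !mulr_sumr; apply: ler_sum => j _.
exact: H2term_sum_le.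
Qed.
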